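(* If $T$ is a subcubic tree of order $n$, then $\psi(T)\le \frac{4n+2}{5}$. Furthermore, equality holds if and only if $T$ arises from $K_2$ by iteratively attaching $P_5$'s (i.e., by applying the operation of attaching a $P_5$ zero or more times).
   Context: All graphs are finite, simple and undirected. A subcubic tree is a tree of maximum degree at most $3$. A dissociation set in a graph $G$ is a vertex subset $F$ such that the induced subgraph $G[F]$ has maximum degree at most $1$; the dissociation number $\psi(G)$ is the maximum cardinality of a dissociation set of $G$. Attaching a $P_5$ to a tree $T$: choose a vertex $u$ of $T$ and form the tree $T'$ with $V(T')=V(T)\cup\{x,y,z,j,k\}$ (five new vertices) and $E(T')=E(T)\cup\{uz,zy,zj,yx,jk\}$. *)

From mathcomp Require Import all_boot.
Set Implicit Arguments. Unset Strict Implicit. Unset Printing Implicit Defensive.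

Definition simple_graph (V : finType) (e : rel V) : Prop :=
  symmetric e /\ irreflexive e.

Definition acyclic (V : finType) (e : rel V) : Prop :=
  forall p : seq V, uniq p -> 2 < size p -> ~~ cycle e p.

Definition connected (V : finType) (e : rel V) : Prop :=
  forall x y : V, connect e x y.

Definition is_tree (V : finType) (e : rel V) : Prop :=
  [/\ simple_graph e, 0 < #|V|, connected e & acyclic e].

Definition deg (V : finType) (e : rel V) (x : V) : nat := #|[set y | e x y]|.

Definition subcubic (V : finType) (e : rel V) : Prop :=
  forall x, deg e x <= 3.

Definition dissociation (V : finType) (e : rel V) (F : {set V}) : bool :=
  [forall x in F, #|[set y in F | e x y]| <= 1].

Definition psi (V : finType) (e : rel V) : nat :=
  \max_(F : {set V} | dissociation e F) #|F|.

(* Attaching a P_5 at u to a tree on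
   {0..n-1}: new vertices x = n, y = n+1, z = n+2, j = n+3, k = n+4 and new
   edges uz, zy, zj, yx, jk. *)
Inductive p5_tree : nat -> seq (nat * nat) -> Prop :=
| p5_K2 : p5_tree 2 [:: (0, 1)]
| p5_attach n E u : p5_tree n E -> u < n ->
    p5_tree (n + 5)
      (E ++ [:: (u, n + 2); (n + 2, n + 1); (n + 2, n + 3);
                (n + 1, n); (n + 3, n + 4)]).

Definition from_K2_by_P5 (V : finType) (e : rel V) : Prop :=
  exists n E (f : V -> nat),
    [/\ p5_tree n E, #|V| = n, injective f, (forall v, f v < n) &
        forall a b, e a b = ((f a, f b) \in E) || ((f b, f a) \in E)].

From mathcomp Require Import all_boot zify.
Set Implicit Arguments. Unset Strict Implicit. Unset Printing Implicit Defensive.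

(* Let F be a maximum dissociation set and S its complement. The connected
   graph has at least n - 1 edges; at most |F|/2 of them lie inside F and at
   most 3|S| meet S, so n - 1 <= |F|/2 + 3|S|, that is 5|F| <= 4n + 2.
   In case of equality F induces a perfect matching and every vertex of S has
   its three neighbours in F. Counting matching edges by their number of ends
   adjacent to S gives more than |S| edges xy with no neighbour of x and
   exactly one neighbour of y in S; two of them, xy and kj, share it, say z.
   Then x, y, z, j, k is a P5 attached at z to the third neighbour u of z, and
   deleting it leaves an extremal pair again: by induction the tree arises
   from K2 by attaching P5's. Conversely, in such a tree the vertices other
   than the centres of the attached P5's form a dissociation set of size
   (4n + 2)/5. *)

Lemma card_set_pred_sum (T : finType) (X : {set T}) (P : pred T) :
  #|[set w in X | P w]| = \sum_(w in X) P w.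
Proof.
rewrite -sum1_card (eq_bigl (fun w => (w \in X) && P w)) => [|w]; last by rewrite inE.
by rewrite big_mkcondr /=; apply: eq_bigr => w _; case: (P w).
Qed.

(* The zeros of [a] outnumber its values > 1 by at least
   [#|F| - \sum_(v in F) a v]; the zeros sent by [p] to values > 1 inject into
   the latter, so the excess consists of zeros sent to ones. *)
Lemma card_zero_next_one (T : finType) (F : {set T}) (p : T -> T) (a : T -> nat) :
  {in F &, injective p} -> {in F, forall v, p v \in F} ->
  {in F, forall v, a v = 0 -> 0 < a (p v)} ->
  #|F| <= \sum_(v in F) a v + #|[set v in F | (a v == 0) && (a (p v) == 1)]|.
Proof.
move=> p_inj p_F no_zero_pair.
set L := [set v in F | _].
have count : #|F| + #|[set v in F | 1 < a v]| <= \sum_(v in F) a v + #|[set v in F | a v == 0]|.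
  rewrite !card_set_pred_sum -sum1_card -!big_split /=.
  by apply: leq_sum => v _; case: (a v) => [|[|n]].
set B := [set v in F | 1 < a (p v)].
have zeros : [set v in F | a v == 0] \subset L :|: B.
  apply/subsetP => v; rewrite !inE => /andP [vF /eqP av0]; rewrite vF av0 /=.
  by have := no_zero_pair v vF av0; case: (a (p v)) => [|[|n]].
have : #|B| <= #|[set v in F | 1 < a v]|.
  rewrite -(card_in_imset (sub_in2 _ p_inj)) => [|v]; last by rewrite inE => /andP [].
  apply/subset_leq_card/subsetP => _ /imsetP [v + ->]; rewrite !inE => /andP [vF ->].
  by rewrite p_F.
have := leq_trans (subset_leq_card zeros) (leq_card_setU L B).
lia.
Qed.

Lemma card_preimage_count (T : finType) n (f : T -> nat) (P : pred nat) :
  injective f -> (forall v, f v < n) -> #|T| = n ->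
  #|[set v | P (f v)]| = count P (iota 0 n).
Proof.
move=> f_inj f_lt card_T.
have uniq_f : uniq (map f (enum T)) by rewrite map_inj_uniq ?enum_uniq.
have sub_f : {subset map f (enum T) <= iota 0 n}.
  by move=> _ /mapP [v _ ->]; rewrite mem_iota f_lt.
have size_f : size (iota 0 n) <= size (map f (enum T)) by rewrite size_iota size_map -cardT card_T.
have [_ eq_f] := uniq_min_size uniq_f sub_f size_f.
have /permP <- := uniq_perm uniq_f (iota_uniq 0 n) eq_f.
rewrite count_map cardsE cardE.
by rewrite /enum_mem size_filter count_filter; apply: eq_count => v; rewrite !inE andbT.
Qed.

Lemma sum_eq_bound (T : finType) (X : {set T}) (g : T -> nat) m :
  {in X, forall v, g v <= m} -> \sum_(v in X) g v = #|X| * m -> {in X, forall v, g v = m}.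
Proof.
move=> le_gm sum_g v vX.
have := sumnB (index_enum T) (P := [in X]) (E1 := g) (E2 := fun _ => m) le_gm.
rewrite sum_nat_const sum_g subnn => /eqP; rewrite sum_nat_eq0.
by move=> /forall_inP /(_ v vX); have := le_gm v vX; lia.
Qed.

Lemma pigeonhole_in (T T' : finType) (A : {set T}) (B : {set T'}) (g : T -> T') :
  {in A, forall v, g v \in B} -> #|B| < #|A| ->
  exists x1 x2, [/\ x1 \in A, x2 \in A, x1 != x2 & g x1 = g x2].
Proof.
move=> gAB ltBA.
have [/existsP [x1 /andP [x1A /existsP [x2 /and3P [x2A ne12 /eqP eq12]]]] | noncoll] :=
  boolP [exists x1 in A, exists x2 in A, (x1 != x2) && (g x1 == g x2)].
  by exists x1, x2.
suff inj_g : {in A &, injective g}.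
  have : #|g @: A| <= #|B|.
    by apply/subset_leq_card/subsetP => _ /imsetP [v vA ->]; apply: gAB.
  by rewrite card_in_imset //; lia.
move=> x1 x2 x1A x2A eq12; apply/eqP; apply: contraNT noncoll => ne12.
by apply/existsP; exists x1; rewrite x1A; apply/existsP; exists x2; rewrite x2A ne12 eq12 eqxx.
Qed.

Definition adj (E : seq (nat * nat)) a b := ((a, b) \in E) || ((b, a) \in E).

Definition p5_edges n u :=
  [:: (u, n + 2); (n + 2, n + 1); (n + 2, n + 3); (n + 1, n); (n + 3, n + 4)].

Lemma adjC E a b : adj E a b = adj E b a.
Proof. by rewrite /adj orbC. Qed.

Lemma adj_cat E1 E2 a b : adj (E1 ++ E2) a b = adj E1 a b || adj E2 a b.
Proof. by rewrite /adj !mem_cat orbACA. Qed.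

Lemma p5_tree_edge_lt n E a b : p5_tree n E -> (a, b) \in E -> a < n /\ b < n.
Proof.
move=> tree; elim: tree a b => [|{}n {}E u _ IH u_lt] a b.
  by rewrite inE => /eqP [-> ->].
rewrite mem_cat => /orP [/IH|]; first lia.
by rewrite !inE !xpair_eqE; lia.
Qed.

Lemma p5_tree_adj_ge n E a b : p5_tree n E -> n <= a -> adj E a b = false.
Proof.
move=> tree le_na; apply/negbTE; rewrite negb_or.
by apply/andP; split; apply/negP => /(p5_tree_edge_lt tree); lia.
Qed.

Lemma p5_tree_mod5 n E : p5_tree n E -> n %% 5 = 2.
Proof. by elim=> // {}n {}E u _ IH _; rewrite modnDr. Qed.

Lemma adj_p5_edges_new n w i l : w < n -> i < 5 -> l < 5 ->
  adj (p5_edges n w) (n + i) (n + l) = (i.+1 == l) || (l.+1 == i).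
Proof.
move=> w_lt; rewrite /adj !inE !xpair_eqE !eqn_add2l.
by case: i => [|[|[|[|[|i]]]]] //; case: l => [|[|[|[|[|l]]]]] //= _ _; lia.
Qed.

Lemma adj_p5_edges_attach n w i b : b < n ->
  adj (p5_edges n w) (n + i) b = (i == 2) && (b == w).
Proof.
move=> b_lt; rewrite /adj !inE !xpair_eqE; apply/idP/andP; first lia.
by case=> /eqP -> /eqP ->; rewrite !eqxx orbT.
Qed.

Lemma adj_p5_edges_old n w a b : a < n -> b < n -> adj (p5_edges n w) a b = false.
Proof. by rewrite /adj !inE !xpair_eqE; lia. Qed.

(* The centre of a P5 attached to a tree on [n] vertices gets label [n + 2],
   and [n %% 5 = 2]. *)
Definition p5_centre i := i %% 5 == 4.

Lemma p5_tree_noncentre_matching n E : p5_tree n E ->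
  forall a b c, ~~ p5_centre a -> ~~ p5_centre b -> ~~ p5_centre c ->
  adj E a b -> adj E a c -> b = c.
Proof.
elim=> [|{}n {}E u tree IH u_lt] a b c.
  by move=> _ _ _; rewrite /adj !inE !xpair_eqE; lia.
have n_mod := p5_tree_mod5 tree; rewrite /p5_centre => na nb nc.
have old_lt a' b' : adj E a' b' -> a' < n /\ b' < n.
  by rewrite /adj => /orP [] /(p5_tree_edge_lt tree); lia.
rewrite !adj_cat => /orP [ab|ab] /orP [ac|ac].
- exact: (IH a b c na nb nc ab ac).
- by move: ac; have := old_lt _ _ ab; rewrite /adj !inE !xpair_eqE; lia.
- by move: ab; have := old_lt _ _ ac; rewrite /adj !inE !xpair_eqE; lia.
- by move: ab ac; rewrite /adj !inE !xpair_eqE; lia.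
Qed.

Lemma count_noncentre m : count (predC p5_centre) (iota 0 (5 * m + 2)) = 4 * m + 2.
Proof.
elim: m => [|m IH] //.
have -> : 5 * m.+1 + 2 = (5 * m + 2) + 5 by lia.
by rewrite iotaD count_cat IH /= /p5_centre; lia.
Qed.

Section InducedSubgraphs.
Variables (V : finType) (e : rel V).
Hypothesis e_sym : symmetric e.
Implicit Types (A B C F X Y : {set V}) (a b v w x y : V).

Definition induced (A : {set V}) : rel V := fun x y => [&& x \in A, y \in A & e x y].
Definition connected_in (A : {set V}) := {in A &, forall x y, connect (induced A) x y}.
Definition nbhd (X : {set V}) v := [set w in X | e v w].
Definition deg_in (X : {set V}) v := #|nbhd X v|.
Definition deg_sum (X : {set V}) := \sum_(v in X) deg_in X v.
Definition degree_le (A : {set V}) m := {in A, forall v, deg_in A v <= m}.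

Lemma nbhd_adj A v w : w \in A -> e v w = (w \in nbhd A v).
Proof. by rewrite inE => ->. Qed.

Lemma deg_inE X v : deg_in X v = \sum_(w in X) e v w.
Proof. exact: card_set_pred_sum. Qed.

Lemma deg_inS X Y v : X \subset Y -> deg_in X v <= deg_in Y v.
Proof.
move=> XY; apply/subset_leq_card/subsetP => w; rewrite !inE => /andP [wX ->].
by rewrite (subsetP XY).
Qed.

Lemma deg_in_setD A F v : F \subset A -> deg_in A v = deg_in F v + deg_in (A :\: F) v.
Proof. by move=> FA; rewrite !deg_inE (big_setID F) (setIidPr FA). Qed.

Lemma nbhd_setD A F v : F \subset A -> nbhd A v = nbhd F v :|: nbhd (A :\: F) v.
Proof.
move=> FA; apply/setP => w; rewrite !inE.
by case wF: (w \in F); rewrite ?(subsetP FA w wF) ?orbF.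
Qed.

Lemma deg_in0_adj X v w : deg_in X v = 0 -> w \in X -> e v w = false.
Proof.
move=> /eqP; rewrite cards_eq0 => /eqP nbhd0 wX; apply/negbTE; apply: contraTN isT => evw.
have : w \in nbhd X v by rewrite inE wX evw.
by rewrite nbhd0 inE.
Qed.

Definition pick_nbr X v := odflt v [pick w in X | e v w].

Lemma nbhd_pick_nbr X v : deg_in X v = 1 -> nbhd X v = [set pick_nbr X v].
Proof.
move=> /eqP /cards1P [w nbhd_w]; rewrite nbhd_w /pick_nbr.
case: pickP => [w' w'_nbr | none].
  have : w' \in nbhd X v by rewrite inE.
  by rewrite nbhd_w inE => /eqP ->.
have : w \in nbhd X v by rewrite nbhd_w set11.
by rewrite inE none.
Qed.

Lemma sum_deg_in_swap X Y : \sum_(v in X) deg_in Y v = \sum_(v in Y) deg_in X v.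
Proof.
under eq_bigr do rewrite deg_inE; rewrite exchange_big /=.
by apply: eq_bigr => v _; rewrite deg_inE; apply: eq_bigr => w _; rewrite e_sym.
Qed.

Lemma connect_induced_closed A C x y :
  (forall v w, v \in C -> w \in A -> e v w -> w \in C) ->
  x \in C -> connect (induced A) x y -> y \in C.
Proof.
move=> closedC + /connectP [p + ->].
elim: p x => [|w p IH] x //= xC /andP [/and3P [_ wA exw] path_p].
exact: IH (closedC _ _ xC wA exw) path_p.
Qed.

Lemma connect_retract A A' (r : V -> V) :
  (forall v w, induced A v w -> r v = r w \/ induced A' (r v) (r w)) ->
  forall a b, connect (induced A) a b -> connect (induced A') (r a) (r b).
Proof.
move=> r_edge a b /connectP [p + ->]; elim: p a => [|w p IH] a /=; first by rewrite connect0.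
case/andP => /r_edge r_aw /IH; apply: connect_trans.
by case: r_aw => [->|]; [exact: connect0 | exact: connect1].
Qed.

Lemma deg_sum_add B w b :
  w \notin B -> b \in B -> e b w -> deg_sum B + 2 <= deg_sum (w |: B).
Proof.
move=> wB bB ebw; rewrite /deg_sum big_setU1 //=.
have degU v : deg_in (w |: B) v = e v w + deg_in B v by rewrite !deg_inE big_setU1.
under [X in _ <= _ + X]eq_bigr do rewrite degU.
rewrite degU big_split /=.
have : 1 <= deg_in B w by rewrite deg_inE (bigD1 b) //= e_sym ebw.
have : 1 <= \sum_(i in B) e i w by rewrite (bigD1 b) //= ebw.
lia.
Qed.

Lemma connected_deg_sum_sub A : connected_in A -> forall k, k <= #|A| ->
  exists2 B : {set V}, B \subset A & #|B| = k /\ 2 * (k - 1) <= deg_sum B.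
Proof.
move=> A_conn; elim=> [|k IH] le_kA; first by exists set0; rewrite ?sub0set ?cards0.
have [B BA [cardB sumB]] := IH (ltnW le_kA).
have [a aA aB] : exists2 a, a \in A & a \notin B.
  have /card_gt0P [a] : 0 < #|A :\: B| by rewrite cardsD (setIidPr BA); lia.
  by rewrite inE => /andP [? ?]; exists a.
have [k0 | k_gt0] := posnP k.
  by exists [set a]; rewrite ?sub1set ?cards1 ?k0.
have /card_gt0P [b bB] : 0 < #|B| by rewrite cardB.
have [/existsP [v /andP [vB /existsP [w /andP [wAB evw]]]] | no_exit] :=
  boolP [exists v in B, exists w in A :\: B, e v w].
  move: wAB; rewrite inE => /andP [wB wA].
  exists (w |: B); first by rewrite subUset sub1set wA BA.
  by rewrite cardsU1 wB cardB; have := deg_sum_add wB vB evw; lia.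
suff : a \in B by rewrite (negbTE aB).
apply: (connect_induced_closed (A := A) _ bB (A_conn _ _ (subsetP BA _ bB) aA)).
move=> v w vB wA evw; apply: contraNT no_exit => wB.
by apply/existsP; exists v; rewrite vB; apply/existsP; exists w; rewrite !inE wB wA evw.
Qed.

Lemma connected_deg_sum A : connected_in A -> 2 * (#|A| - 1) <= deg_sum A.
Proof.
move=> A_conn; have [B BA [cardB sumB]] := connected_deg_sum_sub A_conn (leqnn #|A|).
suff -> : A = B by rewrite cardB.
by apply/eqP; rewrite eq_sym eqEcard BA cardB /=.
Qed.

Section DissociationBound.
Variables A F : {set V}.
Hypotheses (A_conn : connected_in A) (A_subcubic : degree_le A 3).
Hypotheses (FA : F \subset A) (F_diss : degree_le F 1).
Let S := A :\: F.

(* Connectivity gives [deg_sum A >= 2 * (#|A| - 1)], and counting the edges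
   between [F] and [S] from the [S] side gives
   [deg_sum A + \sum_(v in S) deg_in S v
      = \sum_(v in F) deg_in F v + 2 * \sum_(v in S) deg_in A v]. *)
Lemma dissociation_count :
  2 * (#|F| + #|S|) + \sum_(v in S) deg_in S v
    <= \sum_(v in F) deg_in F v + 2 * \sum_(v in S) deg_in A v + 2.
Proof.
have := connected_deg_sum A_conn.
have -> : #|A| = #|F| + #|S| by rewrite -(cardsID F A) (setIidPr FA).
have -> : deg_sum A = \sum_(v in F) deg_in A v + \sum_(v in S) deg_in A v.
  by rewrite /deg_sum (big_setID F) (setIidPr FA).
have split_deg v : deg_in A v = deg_in F v + deg_in S v by apply: deg_in_setD.
have -> : \sum_(v in F) deg_in A v = \sum_(v in F) deg_in F v + \sum_(v in S) deg_in F v.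
  by rewrite (sum_deg_in_swap S F) -big_split; apply: eq_bigr => v _; apply: split_deg.
have -> : \sum_(v in S) deg_in A v = \sum_(v in S) deg_in F v + \sum_(v in S) deg_in S v.
  by rewrite -big_split; apply: eq_bigr => v _; apply: split_deg.
lia.
Qed.

Let sum_deg_in_F : \sum_(v in F) deg_in F v <= #|F| * 1.
Proof. by rewrite -sum_nat_const; apply: leq_sum. Qed.

Let S_subcubic : {in S, forall v, deg_in A v <= 3}.
Proof. by move=> v; rewrite inE => /andP [_]; apply: A_subcubic. Qed.

Let sum_deg_in_S : \sum_(v in S) deg_in A v <= #|S| * 3.
Proof. by rewrite -sum_nat_const; apply: leq_sum S_subcubic. Qed.

Lemma dissociation_bound : 5 * #|F| <= 4 * #|A| + 2.
Proof.
have := dissociation_count; have := sum_deg_in_F; have := sum_deg_in_S.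
have : #|A| = #|F| + #|S| by rewrite -(cardsID F A) (setIidPr FA).
lia.
Qed.

Lemma dissociation_extremal : 5 * #|F| = 4 * #|A| + 2 ->
  [/\ #|F| = 4 * #|S| + 2, {in F, forall v, deg_in F v = 1},
      {in S, forall v, deg_in A v = 3} & \sum_(v in F) deg_in S v = 3 * #|S|].
Proof.
move=> extremal; have := dissociation_count; have := sum_deg_in_F; have := sum_deg_in_S.
have : #|A| = #|F| + #|S| by rewrite -(cardsID F A) (setIidPr FA).
have : \sum_(v in S) deg_in A v = \sum_(v in F) deg_in S v + \sum_(v in S) deg_in S v.
  by rewrite (sum_deg_in_swap F S) -big_split; apply: eq_bigr => v _; apply: deg_in_setD.
move=> sumS cardA le_sumS le_sumF count; split; first lia.
- by apply: sum_eq_bound => //; lia.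
- by apply: sum_eq_bound S_subcubic _; lia.
- lia.
Qed.

End DissociationBound.

(* [A] arises from [A :\: [set x; y; z; j; k]] by attaching a P5 at [u]. *)
Record pendant_P5 A x y z j k u : Prop := PendantP5 {
  pendant_uniq : uniq [:: x; y; z; j; k; u];
  pendant_sub : [set x; y; z; j; k; u] \subset A;
  pendant_x : {in A, forall w, e x w = (w == y)};
  pendant_y : {in A, forall w, e y w = (w == x) || (w == z)};
  pendant_z : {in A, forall w, e z w = [|| w == y, w == j | w == u]};
  pendant_j : {in A, forall w, e j w = (w == k) || (w == z)};
  pendant_k : {in A, forall w, e k w = (w == j)} }.

Hypothesis e_irr : irreflexive e.

Section ExtremalConfiguration.
Variables A F : {set V}.
Let S := A :\: F.
Hypotheses (A_conn : connected_in A) (FA : F \subset A) (S_gt0 : 0 < #|S|).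
Hypotheses (cardF : #|F| = 4 * #|S| + 2) (F_matching : {in F, forall v, deg_in F v = 1}).
Hypothesis S_cubic : {in S, forall v, deg_in A v = 3}.
Hypothesis sum_nbrs_S : \sum_(v in F) deg_in S v = 3 * #|S|.

Let partner := pick_nbr F.

Lemma partner_nbhd v : v \in F -> nbhd F v = [set partner v].
Proof. by move=> vF; apply: nbhd_pick_nbr; apply: F_matching. Qed.

Lemma partner_in v : v \in F -> partner v \in F /\ e v (partner v).
Proof.
move=> vF; have : partner v \in nbhd F v by rewrite partner_nbhd ?set11.
by rewrite inE => /andP.
Qed.

Lemma partnerK v : v \in F -> partner (partner v) = v.
Proof.
move=> vF; have [pvF evp] := partner_in vF.
have : v \in nbhd F (partner v) by rewrite inE vF e_sym.
by rewrite partner_nbhd // inE => /eqP.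
Qed.

Lemma nbhd_F v : v \in F -> nbhd A v = partner v |: nbhd S v.
Proof. by move=> vF; rewrite (nbhd_setD v FA) partner_nbhd. Qed.

Lemma matched_edge_meets_S v : v \in F -> deg_in S v = 0 -> 0 < deg_in S (partner v).
Proof.
move=> vF v_S0; rewrite lt0n; apply/negP => /eqP pv_S0.
have [pvF evp] := partner_in vF.
have /card_gt0P [s sS] := S_gt0.
have sA : s \in A by move: sS; rewrite inE => /andP [].
have : s \in [set v; partner v].
  apply: (connect_induced_closed (A := A)) (A_conn (subsetP FA v vF) sA); last by rewrite !inE eqxx.
  move=> c w; rewrite !inE => /orP [] /eqP -> wA ecw; case wF: (w \in F).
  - have : w \in nbhd F v by rewrite inE wF ecw.
    by rewrite partner_nbhd // inE => ->; rewrite orbT.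
  - by rewrite (@deg_in0_adj S) // inE wF wA in ecw.
  - have : w \in nbhd F (partner v) by rewrite inE wF ecw.
    by rewrite partner_nbhd // partnerK // inE => ->.
  - by rewrite (@deg_in0_adj S) // inE wF wA in ecw.
by rewrite !inE => /orP [] /eqP s_eq; move: sS; rewrite inE s_eq ?vF ?pvF.
Qed.

Lemma partner_inj : {in F &, injective partner}.
Proof. by move=> v w vF wF pvw; rewrite -(partnerK vF) pvw partnerK. Qed.

Let leaves := [set v in F | (deg_in S v == 0) && (deg_in S (partner v) == 1)].

Lemma leaves_outnumber_S : #|S| < #|leaves|.
Proof.
have p_F v : v \in F -> partner v \in F by move=> /partner_in [].
have := card_zero_next_one partner_inj p_F matched_edge_meets_S.
by rewrite sum_nbrs_S cardF -/leaves; lia.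
Qed.

Let hub v := pick_nbr S (partner v).

Lemma hub_nbhd v : v \in leaves -> nbhd S (partner v) = [set hub v].
Proof. by rewrite inE => /and3P [_ _ /eqP pv_S1]; apply: nbhd_pick_nbr. Qed.

Lemma hub_in v : v \in leaves -> hub v \in S /\ e (partner v) (hub v).
Proof.
move=> vL; have : hub v \in nbhd S (partner v) by rewrite hub_nbhd ?set11.
by rewrite inE => /andP.
Qed.

Lemma find_pendant_P5 : exists x y z j k u,
  [/\ pendant_P5 A x y z j k u, [&& x \in F, y \in F, j \in F & k \in F] & z \notin F].
Proof.
have [x [k [xL kL xk hub_xk]]] := pigeonhole_in (fun v vL => (hub_in vL).1) leaves_outnumber_S.
move: (xL) (kL); rewrite !inE => /and3P [xF /eqP x_S0 /eqP y_S1] /and3P [kF /eqP k_S0 /eqP j_S1].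
set y := partner x in y_S1 *; set j := partner k in j_S1 *; set z := hub x in hub_xk *.
have [yF exy] := partner_in xF; have [jF ekj] := partner_in kF.
have [zS eyz] := hub_in xL; have [_ ejz] := hub_in kL; rewrite -hub_xk in ejz.
have [zF zA] : z \notin F /\ z \in A by apply/andP; rewrite -in_setD.
have nbhd0 v : deg_in S v = 0 -> nbhd S v = set0 by move=> /eqP; rewrite cards_eq0 => /eqP.
have nbhd_x : nbhd A x = [set y] by rewrite nbhd_F // nbhd0 // setU0.
have nbhd_k : nbhd A k = [set j] by rewrite nbhd_F // nbhd0 // setU0.
have nbhd_y : nbhd A y = [set x; z] by rewrite nbhd_F // partnerK // hub_nbhd.
have nbhd_j : nbhd A j = [set k; z] by rewrite nbhd_F // partnerK // hub_nbhd // -hub_xk.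
have yj : y != j by apply: contra_neq xk => /(partner_inj xF kF).
have [u] : exists u, u \in nbhd A z :\: [set y; j].
  apply/set0Pn; rewrite -card_gt0 cardsD (setIidPr _) ?cards2 ?yj.
    by move: (S_cubic zS); rewrite /deg_in => ->.
  by rewrite subUset !sub1set !inE (subsetP FA _ yF) (subsetP FA _ jF) !(e_sym z) eyz ejz.
rewrite !inE negb_or => /and3P [/andP [uy uj] uA ezu].
have nbhd_z : nbhd A z = y |: [set j; u].
  apply/eqP; rewrite eq_sym eqEcard -/(deg_in A z) (S_cubic zS).
  rewrite cardsU1 cards2 !inE negb_or yj (eq_sym y) (eq_sym j) uy uj /=.
  by rewrite !subUset !sub1set !inE uA ezu (subsetP FA _ yF) (subsetP FA _ jF) !(e_sym z) eyz ejz.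
have z_nbr v : deg_in S v = 0 -> v != u.
  by move=> v_S0; apply/eqP => v_u; move: ezu; rewrite -v_u e_sym (deg_in0_adj v_S0 zS).
have xz : x != z by apply: contraNneq zF => <-.
have yz : y != z by apply: contraNneq zF => <-.
have zj : z != j by apply: contraNneq zF => ->.
have zk : z != k by apply: contraNneq zF => ->.
have xj : x != j by apply/eqP => x_j; move: x_S0; rewrite x_j j_S1.
have yk : y != k by apply/eqP => y_k; move: y_S1; rewrite y_k k_S0.
have adj_neq a b : e a b -> a != b by apply: contraTneq => ->; rewrite e_irr.
have xy := adj_neq _ _ exy; have jk : j != k by rewrite eq_sym adj_neq.
have [yu ju zu] : [/\ y != u, j != u & z != u] by rewrite !(eq_sym _ u) uy uj eq_sym adj_neq.
exists x, y, z, j, k, u; split; last by [].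
  split; try by move=> w wA; rewrite (nbhd_adj _ wA) ?nbhd_x ?nbhd_y ?nbhd_z ?nbhd_j ?nbhd_k !inE.
  - by rewrite /= !inE !negb_or xy xz xj xk yz yj yk yu zj zk zu jk ju !z_nbr.
  - by rewrite !subUset !sub1set zA uA !(subsetP FA).
by rewrite xF yF jF kF.
Qed.

End ExtremalConfiguration.

Ltac case_mem5 := case/orP => [/eqP->|/orP [/eqP->|/orP [/eqP->|/orP [/eqP->|/eqP->]]]].

Ltac eval_neq := repeat match goal with
  | H : is_true (?a != ?b) |- context [?a == ?b] => rewrite (negbTE H)
  | H : is_true (?a != ?b) |- context [?b == ?a] => rewrite (eq_sym b a) (negbTE H)
  end.

Definition labelling A n E (f : V -> nat) :=
  [/\ #|A| = n, {in A &, injective f}, {in A, forall v, f v < n} &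
      {in A &, forall a b, e a b = adj E (f a) (f b)}].

Section PendantP5.
Variables (A : {set V}) (x y z j k u : V).
Hypothesis pendant : pendant_P5 A x y z j k u.
Let s := [:: x; y; z; j; k].

Lemma mem_pendant v : (v \in [set x; y; z; j; k]) = (v \in s).
Proof. by rewrite !inE !orbA. Qed.

Lemma pendant_P5_exit a b : a \in s -> b \in A -> b \notin s -> e a b -> b = u.
Proof.
case: pendant => _ _ e_x e_y e_z e_j e_k aS bA.
rewrite !inE !negb_or => /and5P [b_x b_y b_z b_j b_k]; move: aS; rewrite !inE; case_mem5;
  by rewrite ?e_x ?e_y ?e_z ?e_j ?e_k //; eval_neq => // /eqP.
Qed.

Lemma pendant_P5_root : u \in A :\: [set x; y; z; j; k].
Proof.
case: pendant => + /subsetP sub_A; rewrite -[[:: x; y; z; j; k; u]]/(rcons s u).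
by rewrite rcons_uniq in_setD mem_pendant => /andP [-> _]; rewrite sub_A // !inE eqxx orbT.
Qed.

Lemma pendant_P5_connected : connected_in A -> connected_in (A :\: [set x; y; z; j; k]).
Proof.
move=> A_conn; pose r v := if v \in s then u else v.
have r_edge v w : induced A v w ->
    r v = r w \/ induced (A :\: [set x; y; z; j; k]) (r v) (r w).
  case/and3P => vA wA evw; rewrite /r.
  case vs: (v \in s); case ws: (w \in s).
  - by left.
  - by left; rewrite (pendant_P5_exit vs wA (negbT ws) evw).
  - by left; rewrite (pendant_P5_exit ws vA (negbT vs)) // e_sym.
  - by right; rewrite /induced !in_setD !mem_pendant vs ws vA wA evw.
move=> a b; rewrite !in_setD !mem_pendant => /andP [/negbTE aS aA] /andP [/negbTE bS bA].
by have := connect_retract r_edge (A_conn a b aA bA); rewrite /r aS bS.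
Qed.

Lemma card_pendant : #|[set x; y; z; j; k]| = 5.
Proof.
case: pendant => + _; rewrite -[[:: x; y; z; j; k; u]]/(rcons s u) rcons_uniq => /andP [_ uniq_s].
by rewrite (eq_card mem_pendant) (card_uniqP uniq_s).
Qed.

Lemma pendant_P5_sub : [set x; y; z; j; k] \subset A.
Proof.
case: pendant => _ /subsetP sub_A _ _ _ _ _; apply/subsetP => v; rewrite mem_pendant => vs.
by apply: sub_A; move: vs; rewrite !inE; case_mem5; rewrite eqxx ?orbT.
Qed.

Lemma pendant_P5_extremal F : [&& x \in F, y \in F, j \in F & k \in F] -> z \notin F ->
  5 * #|F| = 4 * #|A| + 2 ->
  5 * #|F :\: [set x; y; z; j; k]| = 4 * #|A :\: [set x; y; z; j; k]| + 2.
Proof.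
move=> /and4P [xF yF jF kF] zF extremal.
have FX : F :&: [set x; y; z; j; k] = [set x; y; z; j; k] :\ z.
  apply/setP => v; rewrite in_setI in_setD1 andbC; apply/andP/andP => [[vX vF] | [vz vX]].
    by split=> //; apply: contraNneq zF => <-.
  by split=> //; move: vX vz; rewrite mem_pendant !inE; case_mem5; rewrite ?eqxx.
have := cardsD1 z [set x; y; z; j; k]; rewrite card_pendant !inE eqxx orbT -FX => cardFX.
have := subset_leq_card pendant_P5_sub; have := subset_leq_card (subsetIl F [set x; y; z; j; k]).
rewrite !cardsD (setIidPr pendant_P5_sub) card_pendant; lia.
Qed.

Lemma labelling_attach n E f : p5_tree n E ->
  labelling (A :\: [set x; y; z; j; k]) n E f ->
  labelling A (n + 5) (E ++ p5_edges n (f u))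
    (fun v => if v \in s then n + index v s else f v).
Proof.
move=> tree [cardA' f_inj f_lt f_adj]; set g := fun v => _.
have [uniq_xu _ e_x e_y e_z e_j e_k] := pendant.
have uA' := pendant_P5_root; have fu_lt := f_lt u uA'.
move: (uniq_xu); rewrite /= !inE !negb_or.
case/and5P => /and5P [xy xz xj xk xu] /and4P [yz yj yk yu] /and3P [zj zk zu] /andP [jk ju] /andP [ku _].
have g_s v : v \in s -> g v = n + index v s by rewrite /g => ->.
have g_A' v : v \in A :\: [set x; y; z; j; k] -> g v = f v.
  by rewrite /g in_setD mem_pendant => /andP [/negbTE ->].
have A_split v : v \in A -> (v \in s) || (v \in A :\: [set x; y; z; j; k]).
  by move=> vA; rewrite in_setD mem_pendant vA andbT orbN.
have adj_s a b : a \in s -> b \in A -> e a b = adj (E ++ p5_edges n (f u)) (g a) (g b).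
  move=> a_s bA; rewrite (g_s a a_s) adj_cat (p5_tree_adj_ge _ tree (leq_addr _ _)) /=.
  have a_lt : index a s < 5 by rewrite -[5]/(size s) index_mem.
  case/orP: (A_split b bA) => [b_s|bA'].
    have b_lt : index b s < 5 by rewrite -[5]/(size s) index_mem.
    rewrite g_s // adj_p5_edges_new //.
    move: bA; move: a_s b_s; rewrite !inE; case_mem5; case_mem5 => bA;
      by rewrite ?(e_x _ bA) ?(e_y _ bA) ?(e_z _ bA) ?(e_j _ bA) ?(e_k _ bA) /=; eval_neq; rewrite ?eqxx /=.
  rewrite g_A' // adj_p5_edges_attach ?f_lt // (inj_in_eq f_inj) //.
  move: (bA'); rewrite in_setD mem_pendant !inE !negb_or => /andP [/and5P [b_x b_y b_z b_j b_k] _].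
  move: a_s; rewrite !inE; case_mem5;
    by rewrite ?(e_x _ bA) ?(e_y _ bA) ?(e_z _ bA) ?(e_j _ bA) ?(e_k _ bA) /=; eval_neq; rewrite ?eqxx /=.
split.
- by rewrite -(cardsID [set x; y; z; j; k] A) (setIidPr pendant_P5_sub) card_pendant cardA' addnC.
- move=> a b aA bA; case/orP: (A_split a aA) => [a_s|aA']; case/orP: (A_split b bA) => [b_s|bA'].
  + by rewrite !g_s // => /addnI; apply: index_inj.
  + by rewrite g_s // g_A' // => g_eq; move: (f_lt b bA'); rewrite -g_eq ltnNge leq_addr.
  + by rewrite g_A' // g_s // => g_eq; move: (f_lt a aA'); rewrite g_eq ltnNge leq_addr.
  + by rewrite !g_A' //; apply: f_inj.
- move=> v vA; case/orP: (A_split v vA) => [v_s|vA'].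
    by rewrite g_s // ltn_add2l -[5]/(size s) index_mem.
  by rewrite g_A' // ltn_addr ?f_lt.
- move=> a b aA bA; case/orP: (A_split a aA) => [a_s|aA']; first exact: adj_s.
  case/orP: (A_split b bA) => [b_s|bA']; first by rewrite e_sym adjC adj_s.
  by rewrite !g_A' // f_adj // adj_cat adj_p5_edges_old ?orbF ?f_lt.
Qed.

End PendantP5.

Lemma degree_le_sub A B m : B \subset A -> degree_le A m -> degree_le B m.
Proof.
by move=> BA A_le v vB; apply: leq_trans (deg_inS v BA) (A_le v (subsetP BA v vB)).
Qed.

Lemma labelling_K2 a b : e a b ->
  labelling [set a; b] 2 [:: (0, 1)] (fun v => if v == a then 0 else 1).
Proof.
move=> eab; have ba : (b == a) = false by apply: contraTF eab => /eqP ->; rewrite e_irr.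
split.
- by rewrite cards2 eq_sym ba.
- by move=> v w; rewrite !inE => /orP [] /eqP -> /orP [] /eqP ->; rewrite ?eqxx ?ba.
- by move=> v _; case: (v == a).
- move=> v w; rewrite !inE => /orP [] /eqP -> /orP [] /eqP ->;
    by rewrite ?eqxx ?ba ?e_irr ?eab 1?e_sym ?eab.
Qed.

Lemma extremal_p5_labelling A F : connected_in A -> degree_le A 3 ->
  F \subset A -> degree_le F 1 -> 5 * #|F| = 4 * #|A| + 2 ->
  exists n E f, p5_tree n E /\ labelling A n E f.
Proof.
have [N] := ubnP #|A|; elim: N A F => // N IH A F ltAN A_conn A_sub FA F_diss extremal.
have [cardF F_matching S_cubic sum_nbrs] :=
  dissociation_extremal A_conn A_sub FA F_diss extremal.
have [S0 | S_gt0] := posnP #|A :\: F|.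
  have AF : A = F by apply/eqP; rewrite eqEsubset FA andbT -setD_eq0 -cards_eq0 S0.
  have /card_gt0P [a aF] : 0 < #|F| by rewrite cardF addn2.
  have [bF eab] : pick_nbr F a \in F /\ e a (pick_nbr F a).
    have : pick_nbr F a \in nbhd F a by rewrite nbhd_pick_nbr ?F_matching ?set11.
    by rewrite inE => /andP.
  have ab : a != pick_nbr F a by apply: contraTneq eab => <-; rewrite e_irr.
  have -> : A = [set a; pick_nbr F a].
    apply/eqP; rewrite AF eq_sym eqEcard subUset !sub1set aF bF cards2 ab.
    by rewrite cardF S0.
  by exists 2, [:: (0, 1)]; eexists; split; [exact: p5_K2 | exact: labelling_K2 eab].
have [x [y [z [j [k [u [pendant xyjk_F zF]]]]]]] :=
  find_pendant_P5 A_conn FA S_gt0 cardF F_matching S_cubic sum_nbrs.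
set X := [set x; y; z; j; k].
have lt_A'N : #|A :\: X| < N.
  move: ltAN; rewrite -(cardsID X A) (setIidPr (pendant_P5_sub pendant)) (card_pendant pendant); lia.
have [n [E [f [tree lab]]]] := IH (A :\: X) (F :\: X) lt_A'N
  (pendant_P5_connected pendant A_conn) (degree_le_sub (subsetDl A X) A_sub)
  (setSD X FA) (degree_le_sub (subsetDl F X) F_diss)
  (pendant_P5_extremal pendant xyjk_F zF extremal).
have u_lt : f u < n by case: lab => _ _ f_lt _; apply: f_lt (pendant_P5_root pendant).
exists (n + 5), (E ++ p5_edges n (f u)); eexists; split; first exact: p5_attach.
exact: (labelling_attach pendant tree lab).
Qed.

End InducedSubgraphs.

Section Trees.
Variables (V : finType) (e : rel V).

Lemma dissociationP F : reflect (degree_le e F 1) (dissociation e F).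
Proof. exact: forall_inP. Qed.

Lemma psi_attained : exists2 F, dissociation e F & psi e = #|F|.
Proof.
have [|F F_diss max_F] := @eq_bigmax_cond _ (dissociation e) (fun F : {set V} => #|F|).
  by apply/card_gt0P; exists set0; apply/dissociationP => v; rewrite inE.
by exists F; rewrite // -max_F; apply: eq_bigl => F'; rewrite inE.
Qed.

Lemma leq_psi F : dissociation e F -> #|F| <= psi e.
Proof. exact: (@leq_bigmax_cond _ (dissociation e) (fun F : {set V} => #|F|)). Qed.

Lemma connected_setT : connected e -> connected_in e [set: V].
Proof.
move=> conn x y _ _; rewrite (@eq_connect _ _ e) // => a b.
by rewrite /induced !in_setT.
Qed.

Lemma subcubic_setT : subcubic e -> degree_le e [set: V] 3.
Proof.
move=> subcub v _; rewrite /deg_in /nbhd.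
by under eq_finset do rewrite in_setT; apply: subcub.
Qed.

Lemma labelling_from_K2_by_P5 n E f :
  p5_tree n E -> labelling e [set: V] n E f -> from_K2_by_P5 e.
Proof.
move=> tree [card_V f_inj f_lt f_adj]; exists n, E, f; split => //.
- by rewrite -cardsT.
- by move=> a b; apply: f_inj; rewrite in_setT.
- by move=> v; apply: f_lt; rewrite in_setT.
- by move=> a b; apply: f_adj; rewrite in_setT.
Qed.

Lemma from_K2_by_P5_dissociation :
  from_K2_by_P5 e -> exists2 D, dissociation e D & 5 * #|D| = 4 * #|V| + 2.
Proof.
case=> n [E [f [tree card_V f_inj f_lt f_adj]]].
exists [set v | ~~ p5_centre (f v)].
  apply/forall_inP => v; rewrite inE => kv; apply/card_le1_eqP => w1 w2.
  rewrite !inE => /andP [k1 e1] /andP [k2 e2]; apply: f_inj.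
  by apply: (p5_tree_noncentre_matching tree kv k2 k1); rewrite /adj -f_adj.
have n_eq : n = 5 * (n %/ 5) + 2 by rewrite {1}(divn_eq n 5) (p5_tree_mod5 tree) mulnC.
rewrite (card_preimage_count (predC p5_centre) f_inj f_lt card_V) card_V n_eq count_noncentre.
lia.
Qed.

End Trees.

Theorem theorem2p3 (V : finType) (e : rel V) :
  is_tree e -> subcubic e ->
  5 * psi e <= 4 * #|V| + 2 /\
  (5 * psi e = 4 * #|V| + 2 <-> from_K2_by_P5 e).
Proof.
case=> -[e_sym e_irr] _ conn _ subcub.
have V_conn := connected_setT conn; have V_subcubic := subcubic_setT subcub.
have [F /dissociationP F_diss psi_F] := psi_attained e.
have bound : 5 * psi e <= 4 * #|V| + 2.
  by rewrite psi_F -cardsT; apply: (dissociation_bound e_sym V_conn V_subcubic (subsetT F) F_diss).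
split => //; split.
  rewrite psi_F -cardsT => /(extremal_p5_labelling e_sym e_irr V_conn V_subcubic (subsetT F) F_diss).
  by case=> n [E [f [tree lab]]]; apply: labelling_from_K2_by_P5 tree lab.
by case/from_K2_by_P5_dissociation => D /leq_psi D_le cardD; lia.
Qed.
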